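(* (a) If $S$ is an $\varepsilon$-synchronization string, then every consecutive substring of $S$ satisfies the $\varepsilon$-self-matching property. (b) If every consecutive substring of a string $S$ satisfies the $\frac{\varepsilon}{2}$-self-matching property, then $S$ is an $\varepsilon$-synchronization string.
   Context: $\mathrm{ED}$ is insertion/deletion edit distance; $S[i,j)$ is the substring at positions $i..j-1$. $S\in\Sigma^n$ is an $\varepsilon$-synchronization string if $\mathrm{ED}(S[i,j),S[j,k))>(1-\varepsilon)(k-i)$ for all $1\le i<j<k\le n+1$. A monotone matching between $S$ and $S'$ is a set of pairs $\{(a_1,b_1),\dots,(a_m,b_m)\}$ with $a_1<\dots<a_m$, $b_1<\dots<b_m$, $S[a_i]=S'[b_i]$. In a monotone matching from $S$ to itself a pair is good if $a_i=b_i$ and bad otherwise. A string $S$ satisfies the $\varepsilon$-self-matching property if every monotone matching between $S$ and itself contains fewer than $\varepsilon|S|$ bad pairs. *)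

From mathcomp Require Import all_boot all_order all_algebra.
Set Implicit Arguments. Unset Strict Implicit. Unset Printing Implicit Defensive.
Import Order.TTheory GRing.Theory Num.Theory.

Section Defs.
Variable T : eqType.

(* Insertion/deletion edit distance: the standard recursion computing the
   minimum number of insertions and deletions transforming s into t
   (delete head of s, insert head of t, or keep matching heads). *)
Fixpoint ed (s t : seq T) {struct s} : nat :=
  match s with
  | [::] => size t
  | x :: s' =>
      let fix ed_aux (t : seq T) : nat :=
        match t with
        | [::] => size s
        | y :: t' =>
            minn (ed s' t).+1
              (minn (ed_aux t').+1 (if x == y then ed s' t' else (ed s' t').+2))
        end in
      ed_aux t
  end.

(* S[i,j) with 0-indexed positions: the symbols at positions i..j-1. *)
Definition substr (S : seq T) (i j : nat) : seq T := take (j - i) (drop i S).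

(* epsilon-synchronization string (0-indexed version of 1 <= i<j<k <= n+1). *)
Definition sync_string (R : realFieldType) (eps : R) (S : seq T) : Prop :=
  forall i j k : nat, (i < j)%N -> (j < k)%N -> (k <= size S)%N ->
    ((1 - eps) * (k - i)%:R < (ed (substr S i j) (substr S j k))%:R)%R.

Definition monotone_matching (S S' : seq T) (M : seq (nat * nat)) : Prop :=
  sorted ltn (map fst M) /\ sorted ltn (map snd M) /\
  (forall p, p \in M ->
     [/\ (p.1 < size S)%N, (p.2 < size S')%N &
         onth S p.1 = onth S' p.2]).

Definition bad_pairs (M : seq (nat * nat)) : nat := count (fun p => p.1 != p.2) M.

Definition self_matching (R : realFieldType) (eps : R) (S : seq T) : Prop :=
  forall M, monotone_matching S S M -> ((bad_pairs M)%:R < eps * (size S)%:R)%R.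

End Defs.

(* Edit distance and monotone matchings are dual: ED(s, t) = |s| + |t| - 2 max |N| over
   monotone matchings N between s and t.  Hence S is an eps-synchronization string iff
   every matching between adjacent substrings S[i, j) and S[j, k) has fewer than
   eps (k - i) / 2 pairs.

   (b) Shifting such a matching by j - i gives a self-matching of S[i, k) whose pairs
   are all bad, so it has fewer than eps (k - i) / 2 pairs.

   (a) Let M be a self-matching of a synchronization string X of length n, with first
   pair (a, b).  By induction on M, 2 bad(M) < eps (2n - a - b) unless bad(M) = 0.
   A good first pair is dropped.  If a < b, the maximal block G of pairs with first
   coordinate below b lies in [a, b) x [b, r), where r is the second coordinate of the
   next pair (or n); it is a matching between X[a, b) and X[b, r), so
   2 |G| < eps (r - a).  The rest starts at some (a', r) with a' >= b, and
   (r - a) + (2n - a' - r) <= 2n - a - b.  The case a > b is symmetric. *)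

From mathcomp Require Import all_boot all_order all_algebra.
From mathcomp Require Import zify lra.
Import Order.TTheory GRing.Theory Num.Theory.
Set Implicit Arguments. Unset Strict Implicit. Unset Printing Implicit Defensive.

Section Substrings.
Variable T : eqType.
Implicit Types S : seq T.

Lemma size_substr S i j : j <= size S -> size (substr S i j) = j - i.
Proof. by move=> jS; rewrite /substr size_take_min size_drop; lia. Qed.

Lemma onth_substr S i j k : i <= k < j -> onth (substr S i j) (k - i) = onth S k.
Proof.
move=> /andP[ik kj]; rewrite /substr !onthE map_take map_drop nth_take; last by lia.
by rewrite nth_drop subnKC.
Qed.

Lemma substr_substr S i j i' j' : i' <= j' <= j - i ->
  substr (substr S i j) i' j' = substr S (i + i') (i + j').
Proof.
move=> /andP[le_ij' le_j'].
rewrite /substr -[j - i](subnK (leq_trans le_ij' le_j')) -take_drop drop_drop.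
by rewrite take_takel ?[i' + i]addnC ?subnDl //; lia.
Qed.

Lemma substr_cat S i j k : i <= j <= k ->
  substr S i k = substr S i j ++ substr S j k.
Proof.
move=> /andP[ij jk]; rewrite /substr.
have -> : drop j S = drop (j - i) (drop i S) by rewrite drop_drop subnK.
by rewrite -takeD; congr take; lia.
Qed.

End Substrings.

Section MonotoneMatchings.
Variable T : eqType.
Implicit Types (s t : seq T) (N : seq (nat * nat)).

Lemma monotone_matching_nil s t : monotone_matching s t [::].
Proof. by []. Qed.

Lemma monotone_matching_mem s t N e : monotone_matching s t N -> e \in N ->
  [/\ e.1 < size s, e.2 < size t & onth s e.1 = onth t e.2].
Proof. by case=> _ [_]; apply. Qed.

Lemma monotone_matching_cat_lt s t G H e e' :
  monotone_matching s t (G ++ H) -> e \in G -> e' \in H ->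
  e.1 < e'.1 /\ e.2 < e'.2.
Proof.
case=> + [+ _]; rewrite !(sorted_pairwise ltn_trans) !map_cat !pairwise_cat.
move=> /and3P[/allrelP lt1 _ _] /and3P[/allrelP lt2 _ _] eG e'H.
by split; [apply: lt1 | apply: lt2]; apply: map_f.
Qed.

Lemma monotone_matching_lead s t a b N e :
  monotone_matching s t ((a, b) :: N) -> e \in N -> a < e.1 /\ b < e.2.
Proof.
by move=> mm; apply: (monotone_matching_cat_lt (G := [:: (a, b)]) mm (mem_head _ _)).
Qed.

Lemma monotone_matching_lead_le s t a b N e :
  monotone_matching s t ((a, b) :: N) -> e \in (a, b) :: N -> a <= e.1 /\ b <= e.2.
Proof.
move=> mm; rewrite inE => /predU1P[-> //|/(monotone_matching_lead mm)].
by case=> /ltnW ? /ltnW.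
Qed.

Lemma monotone_matching_cat s t G H : monotone_matching s t (G ++ H) ->
  monotone_matching s t G /\ monotone_matching s t H.
Proof.
case=> + [+ mem]; rewrite !map_cat => /cat_sorted2[so1G so1H] /cat_sorted2[so2G so2H].
by split; do 2!split=> //; move=> e eGH; apply: mem; rewrite mem_cat eGH ?orbT.
Qed.

Lemma monotone_matching_swap s t N : monotone_matching s t N ->
  monotone_matching t s [seq (e.2, e.1) | e <- N].
Proof.
case=> so1 [so2 mem]; split; [|split]; rewrite -?map_comp //.
by move=> _ /mapP[e /mem[? ? ?] ->].
Qed.

Lemma monotone_matching_map s t s' t' N (f g : nat -> nat) :
  monotone_matching s t N ->
  {in map fst N &, {homo f : a b / a < b}} ->
  {in map snd N &, {homo g : a b / a < b}} ->
  (forall e, e \in N ->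
     [/\ f e.1 < size s', g e.2 < size t' & onth s' (f e.1) = onth t' (g e.2)]) ->
  monotone_matching s' t' [seq (f e.1, g e.2) | e <- N].
Proof.
case=> so1 [so2 _] f_mono g_mono fgN; split; [|split].
- have -> : [seq e.1 | e <- [seq (f e.1, g e.2) | e <- N]] = map f (map fst N).
    by rewrite -!map_comp.
  by apply: homo_sorted_in f_mono _ so1; apply/allP.
- have -> : [seq e.2 | e <- [seq (f e.1, g e.2) | e <- N]] = map g (map snd N).
    by rewrite -!map_comp.
  by apply: homo_sorted_in g_mono _ so2; apply/allP.
- by move=> _ /mapP[e eN ->]; apply: fgN.
Qed.

Lemma monotone_matching_consl x s t N : monotone_matching s t N ->
  monotone_matching (x :: s) t [seq (e.1.+1, e.2) | e <- N].
Proof.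
move=> mm; apply: (monotone_matching_map (f := succn) (g := id) mm) => //.
by move=> e /(monotone_matching_mem mm).
Qed.

Lemma monotone_matching_consr y s t N : monotone_matching s t N ->
  monotone_matching s (y :: t) [seq (e.1, e.2.+1) | e <- N].
Proof.
move=> mm; apply: (monotone_matching_map (f := id) (g := succn) mm) => //.
by move=> e /(monotone_matching_mem mm).
Qed.

Lemma monotone_matching_cons2 x y s t N : monotone_matching s t N ->
  monotone_matching (x :: s) (y :: t) [seq (e.1.+1, e.2.+1) | e <- N].
Proof.
move=> mm; apply: (monotone_matching_map (f := succn) (g := succn) mm) => //.
by move=> e /(monotone_matching_mem mm).
Qed.

Lemma monotone_matching_cons_eq x s t N : monotone_matching s t N ->
  monotone_matching (x :: s) (x :: t) ((0, 0) :: [seq (e.1.+1, e.2.+1) | e <- N]).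
Proof.
move=> mm; have [so1 [so2 mem]] := monotone_matching_cons2 x x mm.
split; [|split].
- by move: so1; rewrite /= -!map_comp; case: N {mm so2 mem}.
- by move: so2; rewrite /= -!map_comp; case: N {mm so1 mem}.
- by move=> e; rewrite inE => /predU1P[-> //|/mem].
Qed.

Lemma monotone_matching_unconsl x s t N : monotone_matching (x :: s) t N ->
  {in N, forall e, 0 < e.1} -> monotone_matching s t [seq (e.1.-1, e.2) | e <- N].
Proof.
move=> mm pos; apply: (monotone_matching_map (f := predn) (g := id) mm) => //.
- by move=> _ _ /mapP[[a1 b1] /pos /= a1_gt0 ->] /mapP[[a2 b2] /pos /= a2_gt0 ->] /=; lia.
- move=> [[|a] b] eN; first by have := pos _ eN.
  by have [] := monotone_matching_mem mm eN.
Qed.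

Lemma monotone_matching_unconsr y s t N : monotone_matching s (y :: t) N ->
  {in N, forall e, 0 < e.2} -> monotone_matching s t [seq (e.1, e.2.-1) | e <- N].
Proof.
move=> mm pos; apply: (monotone_matching_map (f := id) (g := predn) mm) => //.
- by move=> _ _ /mapP[[a1 b1] /pos /= b1_gt0 ->] /mapP[[a2 b2] /pos /= b2_gt0 ->] /=; lia.
- move=> [a [|b]] eN; first by have := pos _ eN.
  by have [] := monotone_matching_mem mm eN.
Qed.

Lemma monotone_matching_uncons_eq x y s t N :
  monotone_matching (x :: s) (y :: t) ((0, 0) :: N) ->
  x = y /\ monotone_matching s t [seq (e.1.-1, e.2.-1) | e <- N].
Proof.
move=> mm; have [_ _ [->]] := monotone_matching_mem mm (mem_head _ _); split=> //.
have pos e : e \in N -> 0 < e.1 /\ 0 < e.2 := monotone_matching_lead mm.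
have /monotone_matching_cat[_ mmN] := mm : monotone_matching _ _ ([:: (0, 0)] ++ N).
apply: (monotone_matching_map (f := predn) (g := predn) mmN).
- by move=> _ _ /mapP[[a1 b1] /pos /= [? _] ->] /mapP[[a2 b2] /pos /= [? _] ->] /=; lia.
- by move=> _ _ /mapP[[a1 b1] /pos /= [_ ?] ->] /mapP[[a2 b2] /pos /= [_ ?] ->] /=; lia.
- move=> [[|a] [|b]] eN; try by have [] := pos _ eN.
  by have [] := monotone_matching_mem mmN eN.
Qed.

Lemma monotone_matching_cat_self s t N : monotone_matching s t N ->
  monotone_matching (s ++ t) (s ++ t) [seq (e.1, e.2 + size s) | e <- N].
Proof.
move=> mm; apply: (monotone_matching_map (f := id) (g := addn^~ (size s)) mm) => //.
- by move=> a b _ _; rewrite ltn_add2r.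
- move=> [a b] /(monotone_matching_mem mm) /= [lt1 lt2 eq12].
  rewrite size_cat !onth_cat lt1 addnK [b + _ < size s]ltnNge leq_addl /=.
  by split=> //; lia.
Qed.

Lemma monotone_matching_forward_split s t a b N :
  monotone_matching s t ((a, b) :: N) -> a < b ->
  exists G H, [/\ (a, b) :: N = G ++ H, (a, b) \in G, {in G, forall e, e.1 < b}
                 & if H is e :: _ then b <= e.1 else True].
Proof.
move=> mm ab; set M := (a, b) :: N; set P := fun e : nat * nat => b <= e.1.
exists (take (find P M) M), (drop (find P M) M); split.
- by rewrite cat_take_drop.
- by rewrite /M /= /P /= leqNgt ab /= mem_head.
- move=> e eG; rewrite ltnNge; apply/negP => Pe.
  have hasPM : has P M by apply/hasP; exists e => //; apply: mem_take eG.
  have : has P (take (find P M) M) by apply/hasP; exists e.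
  by rewrite (has_take _ hasPM) ltnn.
- case eH: (drop (find P M) M) => [//|e H].
  have hasPM : has P M by rewrite has_find -subn_gt0 -size_drop eH.
  by have := nth_find (0, 0) hasPM; rewrite -[find P M]addn0 -nth_drop eH.
Qed.

Lemma monotone_matching_substr (X Y : seq T) N p q p' q' : monotone_matching X Y N ->
  {in N, forall e, (p <= e.1 < q) && (p' <= e.2 < q')} ->
  monotone_matching (substr X p q) (substr Y p' q') [seq (e.1 - p, e.2 - p') | e <- N].
Proof.
move=> mm box.
apply: (monotone_matching_map (f := subn^~ p) (g := subn^~ p') mm).
- by move=> _ _ /mapP[[a1 b1] /box /= ? ->] /mapP[[a2 b2] /box /= ? ->] /=; lia.
- by move=> _ _ /mapP[[a1 b1] /box /= ? ->] /mapP[[a2 b2] /box /= ? ->] /=; lia.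
- move=> [a b] eN; have /= [lt1 lt2 eq12] := monotone_matching_mem mm eN.
  have /= /andP[pq1 pq2] := box _ eN.
  rewrite !onth_substr // /substr !size_take_min !size_drop.
  by split=> //; lia.
Qed.

End MonotoneMatchings.

Section EditDistance.
Variable T : eqType.
Implicit Types (s t : seq T) (N : seq (nat * nat)).

Lemma ed_nil_r s : ed s [::] = size s.
Proof. by case: s. Qed.

Lemma ed_cons x s y t : ed (x :: s) (y :: t) =
  minn (ed s (y :: t)).+1
       (minn (ed (x :: s) t).+1 (if x == y then ed s t else (ed s t).+2)).
Proof. by []. Qed.

Lemma ed_matching_le s t N : monotone_matching s t N ->
  ed s t + (size N).*2 <= size s + size t.
Proof.
elim: s t N => [|x s IHs] t N mm.
  case: N mm => [|e N] mm; first by rewrite addn0.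
  by have [] := monotone_matching_mem mm (mem_head _ _).
elim: t N mm => [|y t IHt] N mm.
  case: N mm => [|e N] mm; first by rewrite ed_nil_r !addn0.
  by have [] := monotone_matching_mem mm (mem_head _ _).
rewrite ed_cons; case: N mm => [|[a b] N] mm.
  have := IHs (y :: t) [::] (monotone_matching_nil _ _).
  by rewrite /=; lia.
have lead := monotone_matching_lead_le mm.
case: a mm lead => [|a] mm lead; last first.
  have /IHs : monotone_matching s (y :: t) [seq (e.1.-1, e.2) | e <- (a.+1, b) :: N].
    by apply: monotone_matching_unconsl mm _ => -[a' b'] /lead /= [? _]; lia.
  by rewrite size_map /=; lia.
case: b mm lead => [|b] mm lead; last first.
  have /IHt : monotone_matching (x :: s) t [seq (e.1, e.2.-1) | e <- (0, b.+1) :: N].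
    by apply: monotone_matching_unconsr mm _ => -[a' b'] /lead /= [_ ?]; lia.
  by rewrite size_map /=; lia.
have [<- /IHs] := monotone_matching_uncons_eq mm.
by rewrite size_map eqxx /=; lia.
Qed.

Lemma exists_matching_ed s t :
  exists2 N, monotone_matching s t N & size s + size t <= ed s t + (size N).*2.
Proof.
elim: s t => [|x s IHs] t; first by exists [::]; rewrite ?addn0.
elim: t => [|y t IHt]; first by exists [::]; rewrite /= ?ed_nil_r ?addn0.
have [N1 mm1 le1] := IHs (y :: t); have [N2 mm2 le2] := IHt.
have [N3 mm3 le3] := IHs t.
rewrite /= in le1 le2.
rewrite ed_cons; set A := (ed s _).+1; set B := (ed _ t).+1; set C := if _ then _ else _.
have [->|[->|->]] : minn A (minn B C) = A \/ minn A (minn B C) = B \/ minn A (minn B C) = C.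
- by lia.
- exists [seq (e.1.+1, e.2) | e <- N1]; first exact: monotone_matching_consl.
  by rewrite size_map /A /=; lia.
- exists [seq (e.1, e.2.+1) | e <- N2]; first exact: monotone_matching_consr.
  by rewrite size_map /B /=; lia.
rewrite /C; case: eqP => [<-|_].
  exists ((0, 0) :: [seq (e.1.+1, e.2.+1) | e <- N3]).
    exact: monotone_matching_cons_eq.
  by rewrite /= size_map; lia.
exists [seq (e.1.+1, e.2.+1) | e <- N3]; first exact: monotone_matching_cons2.
by rewrite /= size_map; lia.
Qed.

End EditDistance.

Section MatchingBounds.
Variables (R : realFieldType) (T : eqType) (eps : R).
Implicit Types (s t : seq T) (N : seq (nat * nat)).

Lemma ed_gt_iff_matching_lt s t :
  ((1 - eps) * (size s + size t)%:R < (ed s t)%:R)%R <->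
  (forall N, monotone_matching s t N ->
     (((size N).*2)%:R < eps * (size s + size t)%:R)%R).
Proof.
split=> [ed_gt N /ed_matching_le | matching_lt].
  rewrite -(ler_nat R) natrD; lra.
have [N /matching_lt] := exists_matching_ed s t.
rewrite -(ler_nat R) natrD; lra.
Qed.

Lemma self_matching_cat_matching_lt s t N :
  self_matching (eps / 2%:R) (s ++ t) -> monotone_matching s t N ->
  (((size N).*2)%:R < eps * (size s + size t)%:R)%R.
Proof.
move=> self mm; have := self _ (monotone_matching_cat_self mm).
have -> : bad_pairs [seq (e.1, e.2 + size s) | e <- N] = size N.
  rewrite /bad_pairs count_map -[RHS]count_predT; apply: eq_in_count => -[a b] /=.
  by move=> /(monotone_matching_mem mm) /= [? _ _]; apply/eqP; lia.
by rewrite size_cat -muln2 natrM; lra.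
Qed.

End MatchingBounds.

Section Synchronization.
Variables (R : realFieldType) (T : eqType) (eps : R).
Implicit Type S : seq T.

Lemma sync_string_substr S i j :
  j <= size S -> sync_string eps S -> sync_string eps (substr S i j).
Proof.
move=> jS sync i' j' k' ij' jk' kS'; rewrite size_substr // in kS'.
rewrite !substr_substr; try lia.
have -> : k' - i' = (i + k') - (i + i') by lia.
by apply: sync; lia.
Qed.

Lemma sync_string_of_self_matching S :
  (forall i j, i < j -> j <= size S -> self_matching (eps / 2%:R) (substr S i j)) ->
  sync_string eps S.
Proof.
move=> self i j k ij jk kS.
have sizes : size (substr S i j) + size (substr S j k) = k - i.
  by rewrite !size_substr; lia.
rewrite -sizes; apply/ed_gt_iff_matching_lt => N mm.
apply: self_matching_cat_matching_lt mm; rewrite -substr_cat; last by lia.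
by apply: self; lia.
Qed.

End Synchronization.

Definition lead_slack (n : nat) (M : seq (nat * nat)) : nat :=
  if M is e :: _ then n.*2 - e.1 - e.2 else 0.

Lemma lead_slack_swap n M : lead_slack n [seq (e.2, e.1) | e <- M] = lead_slack n M.
Proof. by case: M => //= e _; rewrite subnAC. Qed.

Lemma bad_pairs_swap M : bad_pairs [seq (e.2, e.1) | e <- M] = bad_pairs M.
Proof. by rewrite /bad_pairs count_map; apply: eq_count => e /=; rewrite eq_sym. Qed.

Section SyncSelfMatching.
Variables (R : realFieldType) (T : eqType) (eps : R) (X : seq T).
Hypotheses (eps_gt0 : (0 < eps)%R) (X_sync : sync_string eps X).
Local Notation n := (size X).

Lemma eps_bound_le u A B : (u%:R < eps * A%:R)%R -> A <= B -> (u%:R < eps * B%:R)%R.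
Proof. by move=> ltu AB; apply: lt_le_trans ltu _; rewrite ler_pM2l // ler_nat. Qed.

Lemma eps_bound_add u v A B C : (u%:R < eps * A%:R)%R ->
  (0 < v -> (v%:R < eps * B%:R)%R) -> A + B <= C -> ((u + v)%:R < eps * C%:R)%R.
Proof.
move=> ltu ltv ABC; apply: eps_bound_le ABC.
have epsB_ge0 : (0 <= eps * B%:R)%R := mulr_ge0 (ltW eps_gt0) (ler0n _ _).
case: (posnP v) => [->|/ltv ltv']; rewrite ?addn0 ?natrD; lra.
Qed.

Lemma sync_box_bound N p q r : monotone_matching X X N -> N != [::] ->
  {in N, forall e, (p <= e.1 < q) && (q <= e.2 < r)} -> r <= n ->
  (((size N).*2)%:R < eps * (r - p)%:R)%R.
Proof.
move=> mm N_neq0 box rn.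
have [[a b] /box /= /andP[/andP[pa aq] /andP[qb br]]] : exists e, e \in N.
  by case: N N_neq0 {mm box} => // e N _; exists e; rewrite mem_head.
have sizes : size (substr X p q) + size (substr X q r) = r - p.
  by rewrite !size_substr; lia.
have pq : p < q by lia.
have qr : q < r by lia.
have := X_sync pq qr rn; rewrite -sizes => /ed_gt_iff_matching_lt ed_gt.
by rewrite -(size_map (fun e => (e.1 - p, e.2 - q))); apply/ed_gt/monotone_matching_substr.
Qed.

Definition lead_bounded M : Prop :=
  0 < bad_pairs M -> (((bad_pairs M).*2)%:R < eps * (lead_slack n M)%:R)%R.

Lemma lead_bounded_forward a b M : a < b -> monotone_matching X X ((a, b) :: M) ->
  (forall M', size M' <= size M -> monotone_matching X X M' -> lead_bounded M') ->
  lead_bounded ((a, b) :: M).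
Proof.
move=> ab mm IH _; have -> : lead_slack n ((a, b) :: M) = n.*2 - a - b by [].
have [G [H [eM abG G_lt_b H_head]]] := monotone_matching_forward_split mm ab.
have lead_le e : e \in G ++ H -> a <= e.1 /\ b <= e.2.
  by rewrite -eM; apply: monotone_matching_lead_le mm.
rewrite eM in mm; have [mmG mmH] := monotone_matching_cat mm.
pose r := if H is e :: _ then e.2 else n.
have r_le_n : r <= n.
  rewrite /r; case eH: H => [//|e H']; have eH' : e \in H by rewrite eH mem_head.
  by have [_ /ltnW] := monotone_matching_mem mmH eH'.
have G_box e : e \in G -> (a <= e.1 < b) && (b <= e.2 < r).
  move=> eG; have [ae be] : a <= e.1 /\ b <= e.2 by apply: lead_le; rewrite mem_cat eG.
  rewrite ae G_lt_b //= be /r.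
  case eH: H => [|e' H']; first by have [] := monotone_matching_mem mmG eG.
  have e'H : e' \in H by rewrite eH mem_head.
  by have [] := monotone_matching_cat_lt mm eG e'H.
have G_neq0 : G != [::] by apply/eqP => G0; rewrite G0 in abG.
have bound_G := sync_box_bound mmG G_neq0 G_box r_le_n.
have bad_G : bad_pairs G = size G.
  rewrite /bad_pairs -[RHS]count_predT; apply: eq_in_count => -[a' b'] /G_box /=.
  by move=> ?; apply/eqP; lia.
have IH_H : 0 < (bad_pairs H).*2 -> (((bad_pairs H).*2)%:R < eps * (lead_slack n H)%:R)%R.
  rewrite double_gt0; apply: IH mmH.
  by move: G_neq0 (congr1 size eM); rewrite size_cat -size_eq0 /=; lia.
have -> : bad_pairs ((a, b) :: M) = size G + bad_pairs H.
  by rewrite eM /bad_pairs count_cat -/(bad_pairs G) bad_G.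
rewrite doubleD.
apply: eps_bound_add bound_G IH_H _.
have b_lt_n : b < n by have [] := monotone_matching_mem mmG abG.
move: r_le_n; rewrite /r; case eH: H => [|e H'] /=; first lia.
have [_ be] : a <= e.1 /\ b <= e.2 by apply: lead_le; rewrite eH mem_cat mem_head orbT.
by move: H_head; rewrite eH; lia.
Qed.

Lemma lead_bounded_swap M :
  lead_bounded [seq (e.2, e.1) | e <- M] -> lead_bounded M.
Proof. by rewrite /lead_bounded bad_pairs_swap lead_slack_swap. Qed.

Lemma lead_bounded_matching M : monotone_matching X X M -> lead_bounded M.
Proof.
have [k] := ubnP (size M); elim: k M => // k IH [|[a b] M] //= /ltnSE M_lt_k mm.
have IH' M' : size M' <= size M -> monotone_matching X X M' -> lead_bounded M'.
  by move=> le_M'; apply: IH; apply: leq_ltn_trans le_M' M_lt_k.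
case: (ltngtP a b) => [ab | ba | eq_ab].
- exact: lead_bounded_forward.
- apply: lead_bounded_swap; apply: lead_bounded_forward ba (monotone_matching_swap mm) _.
  by rewrite size_map.
rewrite -{b}eq_ab in mm *.
have /monotone_matching_cat[_ mmM] := mm : monotone_matching X X ([:: (a, a)] ++ M).
rewrite /lead_bounded /bad_pairs /= eqxx -/(bad_pairs M).
move=> /(IH' M (leqnn _) mmM)/eps_bound_le; apply.
case: M {IH IH' M_lt_k mmM} mm => [|[a' b'] M] //= mm.
by have [] := monotone_matching_lead mm (mem_head _ _) => /= *; lia.
Qed.

Lemma self_matching_of_sync : 0 < n -> self_matching eps X.
Proof.
move=> n_gt0 M mm; case: (posnP (bad_pairs M)) => [->|/(lead_bounded_matching mm)].
  by rewrite mulr_gt0 // ltr0n.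
have slack_le : lead_slack n M <= n.*2 by case: M {mm} => //= e _; lia.
by move=> /eps_bound_le/(_ slack_le); rewrite -!muln2 !natrM; lra.
Qed.

End SyncSelfMatching.

Theorem theorem29 (R : realFieldType) (T : eqType) (eps : R) :
  (0 < eps)%R ->
  (forall S : seq T, sync_string eps S ->
     forall i j : nat, (i < j)%N -> (j <= size S)%N ->
       self_matching eps (substr S i j))
  /\
  (forall S : seq T,
     (forall i j : nat, (i < j)%N -> (j <= size S)%N ->
        self_matching (eps / 2%:R) (substr S i j)) ->
     sync_string eps S).
Proof.
move=> eps_gt0; split; last exact: sync_string_of_self_matching.
move=> S sync i j ij jS; apply: self_matching_of_sync eps_gt0 _ _.
- exact: sync_string_substr.
- by rewrite size_substr // subn_gt0.
Qed.
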